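(* Let $L:\mathbb{R}^d\to\mathbb{R}^{\mathcal{Y}}_+$ be a polyhedral loss. Then $L$ is minimizable and elicits a property $\Gamma:=\mathrm{prop}[L]$. Moreover, the range of $\Gamma$, namely $\{\Gamma(p)\subseteq\mathbb{R}^d:p\in\Delta_{\mathcal{Y}}\}$, is a finite set of closed polyhedra.
   Context: $\mathcal{Y}$ is a finite label set, $\Delta_{\mathcal{Y}}$ the probability simplex, $\mathbb{R}^{\mathcal{Y}}_+$ the nonnegative orthant. $L:\mathbb{R}^d\to\mathbb{R}^{\mathcal{Y}}_+$ is polyhedral if each $u\mapsto L(u)_y$ is a pointwise maximum of finitely many affine functions. $L$ is minimizable if $\inf_u\langle p,L(u)\rangle$ is attained for every $p\in\Delta_{\mathcal{Y}}$; in that case it elicits $\mathrm{prop}[L](p)=\arg\min_u\langle p,L(u)\rangle$. *)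

From HB Require Import structures.
From mathcomp Require Import all_boot all_order all_algebra.
From mathcomp Require Import boolp classical_sets functions cardinality reals.
Set Implicit Arguments. Unset Strict Implicit. Unset Printing Implicit Defensive.
Import Order.TTheory GRing.Theory Num.Theory.
Local Open Scope ring_scope.
Local Open Scope classical_set_scope.

Section Defs.
Variables (R : realType) (d : nat) (Y : finType).

Definition dotv (a u : 'rV[R]_d) : R := \sum_(i < d) a 0 i * u 0 i.

Definition affine_eval (ab : 'rV[R]_d * R) (u : 'rV[R]_d) : R :=
  dotv ab.1 u + ab.2.

Definition max_affine (f : 'rV[R]_d -> R) : Prop :=
  exists (ab0 : 'rV[R]_d * R) (s : seq ('rV[R]_d * R)),
    forall u, f u = \big[Num.max/affine_eval ab0 u]_(ab <- s) affine_eval ab u.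

Definition nonneg_loss (L : 'rV[R]_d -> Y -> R) : Prop :=
  forall u y, 0 <= L u y.

Definition polyhedral (L : 'rV[R]_d -> Y -> R) : Prop :=
  nonneg_loss L /\ forall y, max_affine (fun u => L u y).

Definition simplex : set (Y -> R) :=
  [set p | (forall y, 0 <= p y) /\ \sum_(y : Y) p y = 1].

Definition exp_loss (L : 'rV[R]_d -> Y -> R) (p : Y -> R) (u : 'rV[R]_d) : R :=
  \sum_(y : Y) p y * L u y.

Definition minimizable (L : 'rV[R]_d -> Y -> R) : Prop :=
  forall p, simplex p ->
    exists u, forall u', exp_loss L p u <= exp_loss L p u'.

Definition prop (L : 'rV[R]_d -> Y -> R) (p : Y -> R) : set 'rV[R]_d :=
  [set u | forall u', exp_loss L p u <= exp_loss L p u'].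

Definition polyhedron (P : set 'rV[R]_d) : Prop :=
  exists s : seq ('rV[R]_d * R),
    P = [set u | forall ab, ab \in s -> dotv ab.1 u <= ab.2].

End Defs.
Arguments simplex {R Y}.

From HB Require Import structures.
From mathcomp Require Import all_boot all_order all_algebra.
From mathcomp Require Import boolp classical_sets functions cardinality reals.
From mathcomp Require Import ring lra.
Import Order.TTheory GRing.Theory Num.Theory.
Local Open Scope ring_scope.
Local Open Scope classical_set_scope.

(* Write F := u |-> <p, L(u)>.  Since p >= 0, F is itself the upper envelope
   of finitely many affine pieces (one per choice of a piece of every L_y),
   and it is bounded below by 0.  Such an envelope attains its infimum: from
   any point, either the set of active pieces can be enlarged without
   increasing F (follow a direction along which the active pieces agree until
   a new piece is hit), or F is constant on the region with the same active
   set; as there are finitely many active sets, the best of these constant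
   values is the minimum.  The same kind of one-directional argument shows
   that the set of minimizers is a union of such regions, and the regions are
   determined by which pieces of the L_y are active, independently of p;
   hence prop[L] has finitely many values.  Finally, prop[L](p) is the
   sublevel set {F <= min F}, cut out by one halfspace per piece. *)

Set Implicit Arguments.
Unset Strict Implicit.
Unset Printing Implicit Defensive.

Section RealLemmas.
Variable R : realType.

Lemma dotv_shift d (a u e : 'rV[R]_d) t :
  dotv a (u + t *: e) = dotv a u + t * dotv a e.
Proof.
rewrite /dotv mulr_sumr -big_split /=; apply: eq_bigr => i _.
by rewrite !mxE mulrDr mulrCA.
Qed.

Lemma dotvN d (a e : 'rV[R]_d) : dotv a (- e) = - dotv a e.
Proof. by rewrite /dotv -sumrN; apply: eq_bigr => i _; rewrite !mxE mulrN. Qed.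

Lemma dotv_suml d (Y : finType) (p : Y -> R) (a : Y -> 'rV[R]_d) u :
  dotv (\sum_y p y *: a y) u = \sum_y p y * dotv (a y) u.
Proof.
rewrite /dotv; under eq_bigr => i _ do rewrite summxE big_distrl /=.
rewrite exchange_big /=; apply: eq_bigr => y _.
by rewrite mulr_sumr; apply: eq_bigr => i _; rewrite !mxE mulrA.
Qed.

Lemma affine_eval_shift d (ab : 'rV[R]_d * R) u e t :
  affine_eval ab (u + t *: e) = affine_eval ab u + t * dotv ab.1 e.
Proof. by rewrite /affine_eval dotv_shift addrAC. Qed.

Lemma affine_eval_sub d (ab : 'rV[R]_d * R) u v :
  dotv ab.1 (v - u) = affine_eval ab v - affine_eval ab u.
Proof.
have := affine_eval_shift ab u (v - u) 1.
by rewrite scale1r addrC subrK mul1r => ->; rewrite addrAC subrr add0r.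
Qed.

Lemma ray_first_contact (T : finType) (P : pred T) (c s : T -> R) :
  (forall x, P x -> 0 <= c x) -> (exists x, P x && (s x < 0)) ->
  exists t x1, [/\ 0 <= t, forall x, P x -> 0 <= c x + t * s x,
                   P x1 & c x1 + t * s x1 = 0].
Proof.
move=> c_ge0 [x0 x0_neg].
pose ratio x := c x / - s x.
case: (@arg_minP _ _ _ x0 [pred x | P x && (s x < 0)] ratio x0_neg).
move=> x1 /andP[Px1 sx1_lt0] x1_min.
have ratio_ge0 : 0 <= ratio x1 by rewrite divr_ge0 ?c_ge0 // oppr_ge0 ltW.
exists (ratio x1), x1; split=> // [x Px|]; last first.
  by rewrite /ratio; field; rewrite lt_eqF.
have [sx_lt0|sx_ge0] := ltP (s x) 0.
  have := x1_min x; rewrite /= Px sx_lt0 => /(_ isT).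
  by rewrite /ratio ler_pdivlMr ?oppr_gt0 // mulrN; lra.
by have := mulr_ge0 ratio_ge0 sx_ge0; have := c_ge0 x Px; lra.
Qed.

Lemma ray_short_step (T : finType) (P : pred T) (c s : T -> R) :
  (forall x, P x -> 0 < c x) ->
  exists2 t, 0 < t & forall x, P x -> 0 <= c x + t * s x.
Proof.
move=> c_gt0; have [some_neg|no_neg] := pselect (exists x, P x && (s x < 0)).
  have c_ge0 x (Px : P x) := ltW (c_gt0 x Px).
  have [t [x1 [t_ge0 ct_ge0 Px1 hit]]] := ray_first_contact c_ge0 some_neg.
  exists t => //; rewrite lt_def t_ge0 andbT; apply/eqP => t0.
  by have := c_gt0 x1 Px1; rewrite -hit t0 mul0r addr0 ltxx.
exists 1 => // x Px; have := c_gt0 x Px.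
have : 0 <= s x.
  by rewrite leNgt; apply/negP => sx; apply: no_neg; exists x; rewrite Px.
lra.
Qed.

Lemma min_of_finite_classes (T : Type) (K : finType) (F : T -> R)
    (cls : T -> K) (Q : T -> Prop) (t0 : T) :
  (forall u, exists2 w, Q w & F w <= F u) ->
  (forall v w, Q v -> cls w = cls v -> F w = F v) ->
  exists u, forall w, F u <= F w.
Proof.
move=> below const.
have [rep rep_cls] : {rep : K -> T & forall k,
    (exists v, cls v = k) -> cls (rep k) = k}.
  apply: (@choice _ _ (fun k r => (exists v, cls v = k) -> cls r = k)) => k.
  have [[v <-]|none] := pselect (exists v, cls v = k); first by exists v.
  by exists t0 => /none.
pose realized := [pred k | `[< exists v, cls v = k >]].
have realized_t0 : realized (cls t0) by apply/asboolP; exists t0.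
case: (arg_minP (F \o rep) realized_t0) => k _ k_min.
exists (rep k) => w; have [w' Qw' Fw'] := below w.
have realized_w' : realized (cls w') by apply/asboolP; exists w'.
apply: le_trans (k_min _ realized_w') _ => /=.
by rewrite (const w' _ Qw' (rep_cls _ (ex_intro _ w' erefl))).
Qed.

Lemma finite_saturated_family (T I : Type) (K : finType) (cls : T -> K)
    (P : I -> set T) (D : set I) :
  (forall i u v, D i -> cls v = cls u -> P i u -> P i v) ->
  finite_set (P @` D).
Proof.
move=> saturated.
apply: (@sub_finite_set _ _
  ((fun S : {set K} => [set u | cls u \in S]) @` [set: {set K}])).
  move=> _ [i Di <-].
  exists [set k | `[< exists2 u, P i u & cls u = k >]]%SET => //.
  apply/seteqP; split=> u /=; rewrite inE.
    by move=> /asboolP[v Piv /esym cls_uv]; exact: saturated Piv.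
  by move=> Piu; apply/asboolP; exists u.
exact/finite_image/finite_finset.
Qed.

Lemma argmin_set_sublevel (T : Type) (F : T -> R) u0 :
  (forall w, F u0 <= F w) ->
  [set u | forall w, F u <= F w] = [set u | F u <= F u0].
Proof.
move=> u0_min; apply/seteqP; split=> u /= Fu //.
by move=> w; apply: le_trans Fu (u0_min w).
Qed.

End RealLemmas.

Definition affine_envelope (R : realType) (d : nat) (J : Type)
    (ab : J -> 'rV[R]_d * R) (F : 'rV[R]_d -> R) : Prop :=
  (forall j u, affine_eval (ab j) u <= F u) /\
  (forall u, exists j, affine_eval (ab j) u = F u).

Section AffineEnvelope.
Variables (R : realType) (d : nat) (J : finType).
Variables (ab : J -> 'rV[R]_d * R) (F : 'rV[R]_d -> R).
Hypothesis envF : affine_envelope ab F.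

Local Notation piece j := (affine_eval (ab j)).
Local Notation slope j e := (dotv (ab j).1 e).

Definition active u : {set J} := [set j | piece j u == F u].

Definition active_flat u e :=
  {in active u &, forall i j, slope i e = slope j e}.

Definition improvable u := exists2 w, active u \proper active w & F w <= F u.

Lemma envelope_ge j u : piece j u <= F u.
Proof. exact: envF.1. Qed.

Lemma activeP {u j} : reflect (piece j u = F u) (j \in active u).
Proof. by rewrite inE; apply: eqP. Qed.

Lemma active_nonempty u : exists j, j \in active u.
Proof. by have [j /activeP] := envF.2 u; exists j. Qed.

Lemma envelope_eq_piece w j :
  (forall i, piece i w <= piece j w) -> F w = piece j w.
Proof.
move=> j_max; apply/le_anti; rewrite envelope_ge andbT.
by have [i <-] := envF.2 w; apply: j_max.
Qed.

Lemma envelope_congr u v : (forall j, piece j v = piece j u) -> F v = F u.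
Proof.
move=> same; apply/le_anti/andP; split.
  by have [j <-] := envF.2 v; rewrite same envelope_ge.
by have [j <-] := envF.2 u; rewrite -same envelope_ge.
Qed.

Lemma envelope_shift u e t j : j \in active u ->
  (forall i, piece i (u + t *: e) <= piece j (u + t *: e)) ->
  F (u + t *: e) = F u + t * slope j e.
Proof.
move=> /activeP ju j_max.
by rewrite (envelope_eq_piece j_max) affine_eval_shift ju.
Qed.

Lemma active_flatN u e : active_flat u e -> active_flat u (- e).
Proof. by move=> flat i j iu ju; rewrite !dotvN (flat i j iu ju). Qed.

Lemma active_flat_sub u v : active v = active u -> active_flat u (v - u).
Proof.
move=> eq_act i j iu ju.
have /activeP iv : i \in active v by rewrite eq_act.
have /activeP jv : j \in active v by rewrite eq_act.
by rewrite !affine_eval_sub iv jv (activeP iu) (activeP ju).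
Qed.

Lemma active_shift_eq u e t i j : active_flat u e ->
  i \in active u -> j \in active u -> piece i (u + t *: e) = piece j (u + t *: e).
Proof.
move=> flat iu ju.
by rewrite !affine_eval_shift (flat i j iu ju) (activeP iu) (activeP ju).
Qed.

(* Move along [e] until the first inactive piece catches up with the active
   ones: it joins the active set while [F] does not increase. *)
Lemma improvable_steeper u e i j : active_flat u e -> j \in active u ->
  slope j e <= 0 -> slope j e < slope i e -> improvable u.
Proof.
move=> flat ju sj_le0 steeper.
have i_inactive : i \notin active u.
  by apply: contraTN steeper => iu; rewrite (flat i j iu ju) ltxx.
have slack_ge0 k : k \notin active u -> 0 <= F u - piece k u.
  by rewrite subr_ge0 envelope_ge.
have catching_up : exists k, (k \notin active u) && (slope j e - slope k e < 0).
  by exists i; rewrite i_inactive subr_lt0.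
have [t [x [t_ge0 below x_inactive hit]]] :=
  @ray_first_contact _ _ [pred k | k \notin active u] (fun k => F u - piece k u)
    (fun k => slope j e - slope k e) slack_ge0 catching_up.
have j_max k : piece k (u + t *: e) <= piece j (u + t *: e).
  have [ku|ku] := boolP (k \in active u).
    by rewrite (active_shift_eq _ flat ku ju).
  have := below k ku; rewrite /= !affine_eval_shift (activeP ju) mulrBr; lra.
have Fw := envelope_shift ju j_max.
exists (u + t *: e); last first.
  by rewrite Fw; have := mulr_ge0_le0 t_ge0 sj_le0; lra.
apply/properP; split; last exists x => //.
  apply/fintype.subsetP => k ku; apply/activeP.
  by rewrite (envelope_eq_piece j_max) (active_shift_eq _ flat ku ju).
apply/activeP; rewrite (envelope_eq_piece j_max).
by move: hit; rewrite !affine_eval_shift (activeP ju) mulrBr; lra.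
Qed.

Lemma envelope_unbounded m u e j : j \in active u -> slope j e < 0 ->
  (forall i, slope i e <= slope j e) -> exists w, F w < m.
Proof.
move=> ju sj_lt0 steepest.
pose t := (`|F u - m| + 1) / - slope j e.
have t_ge0 : 0 <= t.
  by apply: divr_ge0; [apply: addr_ge0 | rewrite oppr_ge0 ltW].
exists (u + t *: e); rewrite (envelope_shift ju); last first.
  move=> i; rewrite !affine_eval_shift (activeP ju).
  by have := envelope_ge i u; have := ler_wpM2l t_ge0 (steepest i); lra.
have -> : t * slope j e = - (`|F u - m| + 1) by rewrite /t; field; rewrite lt_eqF.
by have := ler_norm (F u - m); lra.
Qed.

Section LowerBound.
Variable m0 : R.
Hypothesis F_ge : forall u, m0 <= F u.

Lemma unimprovable_nonpos_flat u e j : ~ improvable u -> active_flat u e ->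
  j \in active u -> slope j e <= 0 -> slope j e = 0 /\ forall i, slope i e <= 0.
Proof.
move=> stuck flat ju sj_le0.
have steepest i : slope i e <= slope j e.
  rewrite leNgt; apply/negP => steeper.
  exact: stuck (improvable_steeper flat ju sj_le0 steeper).
have sj0 : slope j e = 0.
  apply/le_anti; rewrite sj_le0 leNgt; apply/negP => sj_lt0.
  by have [w] := envelope_unbounded m0 ju sj_lt0 steepest; rewrite ltNge F_ge.
by split=> // i; rewrite -sj0.
Qed.

Lemma unimprovable_flat_slopes u e : ~ improvable u -> active_flat u e ->
  forall i, slope i e = 0.
Proof.
move=> stuck flat i; have [j ju] := active_nonempty u.
have flat_nonpos e' : active_flat u e' -> slope j e' <= 0 ->
    forall k, slope k e' = 0.
  move=> flat' sj_le0.
  have [sj0 le0] := unimprovable_nonpos_flat stuck flat' ju sj_le0.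
  have sjN_le0 : slope j (- e') <= 0 by rewrite dotvN sj0 oppr0.
  have [_ geN0] := unimprovable_nonpos_flat stuck (active_flatN flat') ju sjN_le0.
  by move=> k; apply/le_anti; rewrite le0 /= -oppr_le0 -dotvN geN0.
have [sj_le0|sj_gt0] := leP (slope j e) 0; first exact: flat_nonpos.
apply/eqP; rewrite -oppr_eq0 -dotvN; apply/eqP.
by apply: flat_nonpos (active_flatN flat) _ i; rewrite dotvN oppr_le0 ltW.
Qed.

Lemma unimprovable_class_const u v : ~ improvable u ->
  active v = active u -> F v = F u.
Proof.
move=> stuck eq_act; apply: envelope_congr => j.
have /eqP := unimprovable_flat_slopes stuck (active_flat_sub eq_act) j.
by rewrite affine_eval_sub subr_eq0 => /eqP.
Qed.

Lemma exists_unimprovable_below u : exists2 w, ~ improvable w & F w <= F u.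
Proof.
suff descend n v : #|~: active v| = n -> F v <= F u ->
    exists2 w, ~ improvable w & F w <= F u by exact: descend.
elim/ltn_ind: n v => n IH v card_v Fv.
have [[w more_active Fw]|stuck] := pselect (improvable v); last by exists v.
apply: (IH _ _ w erefl (le_trans Fw Fv)).
by rewrite -card_v; apply: proper_card; rewrite properC.
Qed.

Lemma envelope_attains_min : exists u, forall w, F u <= F w.
Proof.
apply: (min_of_finite_classes (cls := active) 0 exists_unimprovable_below).
by move=> v w; apply: unimprovable_class_const.
Qed.

End LowerBound.

(* If [F v > F u] although [u] and [v] have the same active pieces, then [F]
   would decrease when moving from [u] a little away from [v]. *)
Lemma argmin_active_closed u v : (forall w, F u <= F w) ->
  active v = active u -> forall w, F v <= F w.
Proof.
move=> u_min eq_act w; have [j ju] := active_nonempty u.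
have /activeP jv : j \in active v by rewrite eq_act.
have flat := active_flat_sub eq_act.
suff : slope j (v - u) <= 0.
  by rewrite affine_eval_sub jv (activeP ju); have := u_min w; lra.
have slack_gt0 k : k \notin active u -> 0 < F u - piece k u.
  move=> ku; rewrite subr_gt0 lt_neqAle envelope_ge andbT.
  by apply: contraNneq ku => /activeP.
have [t t_gt0 below] := @ray_short_step _ _ [pred k | k \notin active u]
  (fun k => F u - piece k u) (fun k => slope k (v - u) - slope j (v - u))
  slack_gt0.
have := u_min (u + (- t) *: (v - u)); rewrite (envelope_shift ju); last first.
  move=> k; have [ku|ku] := boolP (k \in active u).
    by rewrite (active_shift_eq _ flat ku ju).
  have := below k ku; rewrite /= !affine_eval_shift (activeP ju) mulrBr; lra.
rewrite mulNr => descent_ge.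
have : t * slope j (v - u) <= 0 by lra.
by rewrite pmulr_rle0.
Qed.

Lemma envelope_sublevel_polyhedron m : polyhedron [set u | F u <= m].
Proof.
exists [seq ((ab j).1, m - (ab j).2) | j <- enum J].
apply/seteqP; split=> u /=.
  move=> Fu _ /mapP[j _ ->] /=.
  by have := envelope_ge j u; rewrite /affine_eval; lra.
move=> halfspaces; have [j <-] := envF.2 u.
have := halfspaces _ (map_f (fun j => ((ab j).1, m - (ab j).2)) (mem_enum J j)).
by rewrite /affine_eval /=; lra.
Qed.

End AffineEnvelope.

(* Indices past the end of [ab0 :: s] read [ab0], itself a piece: this pads
   the lists of pieces of all the [L_y] to a common length [n]. *)
Lemma max_affine_envelope_nth (R : realType) (d : nat) (f : 'rV[R]_d -> R)
    (ab0 : 'rV[R]_d * R) (s : seq ('rV[R]_d * R)) (n : nat) :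
  (forall u, f u = \big[Num.max/affine_eval ab0 u]_(ab <- s) affine_eval ab u) ->
  (size s < n)%N -> affine_envelope (fun i : 'I_n => nth ab0 (ab0 :: s) i) f.
Proof.
move=> f_max s_lt_n; split=> [i u|u]; rewrite f_max.
  suff ub ab : ab \in ab0 :: s -> affine_eval ab u <=
      \big[Num.max/affine_eval ab0 u]_(ab <- s) affine_eval ab u.
    have [i_small|i_big] := ltnP i (size (ab0 :: s)); first exact/ub/mem_nth.
    by rewrite nth_default // ub ?mem_head.
  rewrite inE => /predU1P[->|ab_s]; last first.
    exact: (le_bigmax_seq _ _ xpredT (fun ab => affine_eval ab u) ab_s).
  by rewrite bigmax_idl le_max lexx.
have [ab ab_in ->] : exists2 ab, ab \in ab0 :: s &
    \big[Num.max/affine_eval ab0 u]_(ab <- s) affine_eval ab u = affine_eval ab u.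
  rewrite big_seq; elim/big_rec: _ => [|ab' m ab'_s [ab ab_in ->]].
    by exists ab0; rewrite ?mem_head.
  rewrite maxEle; case: ifP => _; first by exists ab.
  by exists ab'; rewrite // inE ab'_s orbT.
have index_lt : (index ab (ab0 :: s) < n)%N.
  have : (index ab (ab0 :: s) < size (ab0 :: s))%N by rewrite index_mem.
  by move/leq_trans; apply.
by exists (Ordinal index_lt); rewrite /= nth_index.
Qed.

Lemma polyhedral_envelopes (R : realType) (d : nat) (Y : finType)
    (L : 'rV[R]_d -> Y -> R) :
  (forall y, max_affine (fun u => L u y)) ->
  exists n (ab : Y -> 'I_n -> 'rV[R]_d * R),
    forall y, affine_envelope (ab y) (fun u => L u y).
Proof.
move=> L_max.
have {}L_max y : exists z : ('rV[R]_d * R) * seq ('rV[R]_d * R), forall u,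
    L u y = \big[Num.max/affine_eval z.1 u]_(ab <- z.2) affine_eval ab u.
  by have [ab0 [s L_eq]] := L_max y; exists (ab0, s).
have [z z_spec] := choice L_max.
exists (\max_y size (z y).2).+1, (fun y i => nth (z y).1 ((z y).1 :: (z y).2) i).
by move=> y; apply: max_affine_envelope_nth (z_spec y) _; rewrite ltnS leq_bigmax.
Qed.

Section ExpectedLoss.
Variables (R : realType) (d : nat) (Y I : finType).
Variables (ab : Y -> I -> 'rV[R]_d * R) (L : 'rV[R]_d -> Y -> R) (p : Y -> R).
Hypothesis L_env : forall y, affine_envelope (ab y) (fun u => L u y).
Hypothesis p_ge0 : forall y, 0 <= p y.

Definition mixed_piece (k : {ffun Y -> I}) : 'rV[R]_d * R :=
  (\sum_y p y *: (ab y (k y)).1, \sum_y p y * (ab y (k y)).2).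

Definition pattern u : {set Y * I} :=
  [set x | affine_eval (ab x.1 x.2) u == L u x.1].

Lemma affine_eval_mixed k u :
  affine_eval (mixed_piece k) u = \sum_y p y * affine_eval (ab y (k y)) u.
Proof.
rewrite /affine_eval /= dotv_suml -big_split /=.
by apply: eq_bigr => y _; rewrite mulrDr.
Qed.

Lemma exp_loss_envelope : affine_envelope mixed_piece (exp_loss L p).
Proof.
split=> [k u|u].
  rewrite affine_eval_mixed; apply: ler_sum => y _.
  by apply: ler_wpM2l => //; apply: (L_env y).1.
have [k k_active] := choice (fun y => (L_env y).2 u).
exists [ffun y => k y]; rewrite affine_eval_mixed.
by apply: eq_bigr => y _; rewrite ffunE k_active.
Qed.

Lemma mem_active_exp_loss u k :
  (k \in active mixed_piece (exp_loss L p) u) =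
  [forall y, (p y == 0) || ((y, k y) \in pattern u)].
Proof.
rewrite inE affine_eval_mixed /exp_loss eq_sym -subr_eq0 -sumrB.
have gap_ge0 y : 0 <= p y * L u y - p y * affine_eval (ab y (k y)) u.
  by rewrite -mulrBr mulr_ge0 // subr_ge0 (L_env y).1.
apply/eqP/forallP => [gaps0 y | all_active].
  have := @psumr_eq0P _ _ xpredT _ (fun y _ => gap_ge0 y) gaps0 y isT.
  by rewrite -mulrBr inE /= => /eqP; rewrite mulf_eq0 subr_eq0 [L u y == _]eq_sym.
apply: big1 => y _; have /orP[/eqP ->|] := all_active y.
  by rewrite !mul0r subrr.
by rewrite inE => /eqP ->; rewrite subrr.
Qed.

Lemma prop_pattern_closed u v :
  pattern v = pattern u -> prop L p u -> prop L p v.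
Proof.
move=> eq_pat u_min; apply: (argmin_active_closed exp_loss_envelope u_min).
by apply/setP => k; rewrite !mem_active_exp_loss eq_pat.
Qed.

End ExpectedLoss.

Theorem lemma2 (R : realType) (d : nat) (Y : finType)
    (L : 'rV[R]_d -> Y -> R) :
  polyhedral L ->
  minimizable L /\
  finite_set [set prop L p | p in simplex] /\
  (forall p, simplex p -> polyhedron (prop L p)).
Proof.
case=> L_ge0 /polyhedral_envelopes[n [ab L_env]].
have env p : simplex p -> affine_envelope (mixed_piece ab p) (exp_loss L p).
  by case=> p_ge0 _; exact: exp_loss_envelope.
have exp_loss_min p : simplex p ->
    exists u, forall w, exp_loss L p u <= exp_loss L p w.
  move=> Dp; apply: (envelope_attains_min (env p Dp) (m0 := 0)) => u.
  by apply: sumr_ge0 => y _; rewrite mulr_ge0 ?L_ge0 ?Dp.1.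
split; first exact: exp_loss_min.
split.
  apply: (finite_saturated_family (cls := pattern ab L)) => p u v [p_ge0 _].
  exact: prop_pattern_closed.
move=> p Dp; have [u u_min] := exp_loss_min p Dp.
rewrite /prop (argmin_set_sublevel u_min).
exact: (envelope_sublevel_polyhedron (env p Dp)).
Qed.
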